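(* Let $H$ be a connected graph that is not a tree. If $H\in\mathcal{G}$, then the girth of $H$ is at most $6$.
   Context: All graphs are finite and simple. $d_{H,2}(x,y)=\min\{d_H(x,y),2\}$ with $d_H$ the shortest-path distance. A local adjacency basis of $H$ is a minimum-size set $S\subseteq V(H)$ such that for any two adjacent vertices $x,y$ some $s\in S$ satisfies $d_{H,2}(s,x)\ne d_{H,2}(s,y)$. $\mathcal{G}$: class of graphs $H$ such that every local adjacency basis $B$ of $H$ satisfies $B\subseteq N_H(v)$ for some $v\in V(H)$ (open neighbourhood). The girth is the length of a shortest cycle. *)

From mathcomp Require Import all_boot.
Set Implicit Arguments. Unset Strict Implicit. Unset Printing Implicit Defensive.

Definition simple_graph (T : finType) (e : rel T) : Prop :=
  symmetric e /\ irreflexive e.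

Section Graph.
Variables (T : finType) (e : rel T).

Definition walk_len (x y : T) (n : nat) : bool :=
  [exists t : n.-tuple T, path e x t && (last x t == y)].

(* shortest-path distance d_H(x,y); walks of length < #|T| suffice when
   y is reachable; if y is unreachable the value is #|T| (stands for infinity) *)
Definition dist (x y : T) : nat := find (walk_len x y) (iota 0 #|T|).

Definition dist2 (x y : T) : nat := minn (dist x y) 2.

Definition local_adj_resolving (S : {set T}) : Prop :=
  forall x y, e x y -> exists2 s, s \in S & dist2 s x != dist2 s y.

Definition local_adj_basis (B : {set T}) : Prop :=
  local_adj_resolving B /\ forall S, local_adj_resolving S -> #|B| <= #|S|.

Definition open_nbhd (v : T) : {set T} := [set u | e v u].

Definition in_class_G : Prop :=
  forall B, local_adj_basis B -> exists v, B \subset open_nbhd v.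

Definition connected_graph : Prop := forall x y, connect e x y.

Definition has_cycle_len (k : nat) : bool :=
  [exists t : k.-tuple T, (2 < k) && cycle e t && uniq t].

Definition acyclic : Prop := forall k, ~~ has_cycle_len k.

Definition is_tree : Prop := connected_graph /\ acyclic.

Definition girth_is (g : nat) : Prop :=
  has_cycle_len g /\ forall k, has_cycle_len k -> g <= k.

End Graph.

From mathcomp Require Import all_boot.
Set Implicit Arguments. Unset Strict Implicit. Unset Printing Implicit Defensive.

(* If every local adjacency basis lies in some open neighbourhood N(v), then
   the vertex s of a basis that separates the ends of an edge xy is adjacent
   to v and, since d_{H,2}(s,x) <> d_{H,2}(s,y), equal or adjacent to x or y.
   So every edge has an end within distance two of v. On a cycle this is
   impossible without a cycle of length 3, 4, 5 or 6: a cycle vertex farther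
   than two from v would close a 4- or 6-cycle through v with its two cycle
   neighbours, one at distance exactly two would close a 3-, 4- or 5-cycle,
   and the remaining vertices, all within distance one, would span a
   triangle with v. *)

Section Distance.
Variables (T : finType) (e : rel T).

Lemma walk_len_dist x y : dist e x y < #|T| -> walk_len e x y (dist e x y).
Proof.
move=> lt_d; have found : has (walk_len e x y) (iota 0 #|T|).
  by rewrite has_find size_iota.
by have := nth_find 0 found; rewrite -/(dist e x y) nth_iota.
Qed.

Lemma dist_refl x : dist e x x = 0.
Proof.
have : 0 < #|T| by apply/card_gt0P; exists x.
rewrite /dist; case: #|T| => [//|n] _ /=.
suff -> : walk_len e x x 0 by [].
by apply/existsP; exists [tuple]; rewrite /= eqxx.
Qed.

Lemma dist_eq0 x y : dist e x y = 0 -> x = y.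
Proof.
move=> d0; have : dist e x y < #|T| by rewrite d0; apply/card_gt0P; exists x.
move/walk_len_dist; rewrite d0 => /existsP[[[|//] ?]].
by case/andP=> _ /eqP.
Qed.

Lemma dist_lt2 x y : dist e x y < 2 -> (x == y) || e x y.
Proof.
move=> lt_d2; have [lt_dT|le_Td] := ltnP (dist e x y) #|T|; last first.
  have /card_le1_eqP eqT : #|T| <= 1 by apply: leq_trans le_Td _.
  by rewrite (eqT x y) ?eqxx.
case/existsP: (walk_len_dist lt_dT) => -[[|z [|w t]] /= /eqP size_t].
- by move=> ->.
- by case/andP=> /andP[xz _] /eqP <-; rewrite xz orbT.
- by rewrite -size_t in lt_d2.
Qed.

Lemma dist2_neq_close s x y : dist2 e s x != dist2 e s y ->
  [|| s == x, e s x, s == y | e s y].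
Proof.
rewrite /dist2 => neq.
have [/dist_lt2 close|ge2x] := ltnP (dist e s x) 2.
  by case/orP: close => ->; rewrite ?orbT.
have [/dist_lt2 close|ge2y] := ltnP (dist e s y) 2.
  by case/orP: close => ->; rewrite !orbT.
by rewrite (minn_idPr ge2x) (minn_idPr ge2y) eqxx in neq.
Qed.

End Distance.

Section LocalAdjacencyBasis.
Variables (T : finType) (e : rel T).

Definition local_adj_resolvingb (S : {set T}) : bool :=
  [forall x, forall y, e x y ==> [exists s in S, dist2 e s x != dist2 e s y]].

Lemma local_adj_resolvingP S :
  reflect (local_adj_resolving e S) (local_adj_resolvingb S).
Proof.
apply: (iffP forallP) => [res x y xy | res x].
  move/forallP/(_ y): (res x); rewrite xy => /existsP[s /andP[sS neq]].
  by exists s.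
apply/forallP => y; apply/implyP => /res[s sS neq].
by apply/existsP; exists s; rewrite sS.
Qed.

Lemma local_adj_resolvingT : irreflexive e -> local_adj_resolving e [set: T].
Proof.
move=> e_irr x y xy; exists x; first by rewrite inE.
rewrite /dist2 dist_refl min0n eq_sym -lt0n leq_min andbT lt0n.
by apply: contraTneq xy => /dist_eq0 <-; rewrite e_irr.
Qed.

Lemma local_adj_basis_exists : irreflexive e -> exists B, local_adj_basis e B.
Proof.
move/local_adj_resolvingT/local_adj_resolvingP => resT.
case: (arg_minnP (fun S : {set T} => #|S|) resT) => B.
move=> /local_adj_resolvingP resB minB.
by exists B; split=> // S /local_adj_resolvingP; apply: minB.
Qed.

Definition within_two (v x : T) : bool :=
  [|| x == v, e v x | [exists s, e v s && e s x]].

Lemma resolving_edge_within_two S v x y :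
  local_adj_resolving e S -> S \subset open_nbhd e v -> e x y ->
  within_two v x || within_two v y.
Proof.
move=> res /subsetP S_nbhd /res[s /S_nbhd]; rewrite inE => vs /dist2_neq_close.
have near z : (s == z) || e s z -> within_two v z.
  case/orP=> [/eqP <-|sz]; first by rewrite /within_two vs orbT.
  by rewrite /within_two; apply/or3P/Or33/existsP; exists s; rewrite vs.
case/or4P=> close; apply/orP; [left|left|right|right].
all: by apply: near; rewrite close ?orbT.
Qed.

End LocalAdjacencyBasis.

Section Cycles.
Variables (T : finType) (e : rel T).

Lemma has_cycle_len_le_card k : has_cycle_len e k -> k <= #|T|.
Proof.
case/existsP=> t /andP[_ t_uniq].
by rewrite -(size_tuple t) -(card_uniqP t_uniq) max_card.
Qed.

Lemma has_cycle_of_not_tree :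
  connected_graph e -> ~ is_tree e -> exists k, has_cycle_len e k.
Proof.
move=> conn not_tree.
have [/existsP[k cyc_k]|no_cyc] :=
  boolP [exists k : 'I_#|T|.+1, has_cycle_len e k].
  by exists k.
case: not_tree; split=> // k; apply/negP => cyc_k; case/existsP: no_cyc.
by exists (Ordinal (has_cycle_len_le_card cyc_k : k < #|T|.+1)).
Qed.

Lemma girth_exists : (exists k, has_cycle_len e k) -> exists g, girth_is e g.
Proof. by move=> ex_cyc; case: (ex_minnP ex_cyc) => g; exists g. Qed.

Lemma has_cycle_len_seq (s : seq T) :
  2 < size s -> cycle e s -> uniq s -> has_cycle_len e (size s).
Proof.
move=> s_gt2 s_cyc s_uniq; apply/existsP; exists (in_tuple s).
by rewrite s_gt2 s_cyc.
Qed.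

Lemma cycle_nbrs (t : seq T) x :
  cycle e t -> uniq t -> 2 < size t -> x \in t ->
  exists p q, [/\ p \in t, q \in t, p != q, e p x & e x q].
Proof.
move=> t_cyc t_uniq t_gt2 /rot_to[i s rot_t].
have s_cyc : cycle e (x :: s) by rewrite -rot_t rot_cycle.
have s_uniq : uniq (x :: s) by rewrite -rot_t rot_uniq.
have s_gt2 : 2 < size (x :: s) by rewrite -rot_t size_rot.
have s_t z : z \in x :: s -> z \in t by rewrite -rot_t mem_rot.
case: s s_cyc s_uniq s_gt2 s_t {rot_t} => [//|a s]; case/lastP: s => [//|s b].
rewrite /= rcons_path last_rcons => /andP[xa /andP[_ bx]].
move=> /andP[_ /andP[a_nin _]] _ s_t.
exists b, a; split=> //.
- by apply: s_t; rewrite !inE mem_rcons inE eqxx !orbT.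
- by apply: s_t; rewrite !inE eqxx orbT.
- by apply: contraNneq a_nin => ->; rewrite mem_rcons inE eqxx.
Qed.

End Cycles.

Ltac solve_uniq_by_neqs :=
  rewrite /= !inE !negb_or -?andbA;
  repeat (apply/andP; split); by [|rewrite eq_sym].

Section GirthAtLeastSeven.
Variables (T : finType) (e : rel T).
Hypotheses (e_sym : symmetric e) (e_irr : irreflexive e).
Hypothesis no_short_cycle : forall k, 2 < k < 7 -> ~~ has_cycle_len e k.

Lemma adj_neq x y : e x y -> x != y.
Proof. by apply: contraTneq => ->; rewrite e_irr. Qed.

Lemma no_closed_walk (s : seq T) :
  2 < size s < 7 -> cycle e s -> uniq s -> False.
Proof.
move=> s_size s_cyc s_uniq; case/negP: (no_short_cycle s_size).
by apply: has_cycle_len_seq => //; case/andP: s_size.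
Qed.

Lemma no_triangle a b c : e a b -> e b c -> e c a -> False.
Proof.
move=> ab bc ca; have := adj_neq ab; have := adj_neq bc; have := adj_neq ca.
move=> ? ? ?; apply: (@no_closed_walk [:: a; b; c]); rewrite //= ?ab ?bc ?ca //.
solve_uniq_by_neqs.
Qed.

Lemma no_square a b c d :
  e a b -> e b c -> e c d -> e d a -> a != c -> b != d -> False.
Proof.
move=> ab bc cd da ? ?; have := adj_neq ab; have := adj_neq bc.
have := adj_neq cd; have := adj_neq da => ? ? ? ?.
apply: (@no_closed_walk [:: a; b; c; d]); rewrite //= ?ab ?bc ?cd ?da //.
solve_uniq_by_neqs.
Qed.

Lemma no_pentagon a b c d f :
  e a b -> e b c -> e c d -> e d f -> e f a ->
  a != c -> a != d -> b != d -> b != f -> c != f -> False.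
Proof.
move=> ab bc cd df fa ? ? ? ? ?; have := adj_neq ab; have := adj_neq bc.
have := adj_neq cd; have := adj_neq df; have := adj_neq fa => ? ? ? ? ?.
apply: (@no_closed_walk [:: a; b; c; d; f]); rewrite //= ?ab ?bc ?cd ?df ?fa //.
solve_uniq_by_neqs.
Qed.

Lemma no_hexagon a b c d f h :
  e a b -> e b c -> e c d -> e d f -> e f h -> e h a ->
  a != c -> a != d -> a != f -> b != d -> b != f -> b != h ->
  c != f -> c != h -> d != h -> False.
Proof.
move=> ab bc cd df fh ha ? ? ? ? ? ? ? ? ?; have := adj_neq ab.
have := adj_neq bc; have := adj_neq cd; have := adj_neq df.
have := adj_neq fh; have := adj_neq ha => ? ? ? ? ? ?.
apply: (@no_closed_walk [:: a; b; c; d; f; h]);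
  rewrite //= ?ab ?bc ?cd ?df ?fh ?ha //.
solve_uniq_by_neqs.
Qed.

Variable v : T.
Hypothesis edge_within_two :
  forall x y, e x y -> within_two e v x || within_two e v y.

Lemma far_vertex_nbr_dist_two x p :
  ~~ within_two e v x -> e x p -> exists2 a, e v a & e a p.
Proof.
move=> far xp; have /orP[near_x|] := edge_within_two xp.
  by rewrite near_x in far.
move: far; rewrite /within_two !negb_or => /and3P[xv vx no_path].
case/or3P=> [/eqP pv|vp|/existsP[a /andP[va ap]]]; last by exists a.
  by move: vx; rewrite -pv e_sym xp.
by case/existsP: no_path; exists p; rewrite vp e_sym.
Qed.

Lemma far_vertex_nbr_unique x p q :
  ~~ within_two e v x -> e x p -> e x q -> p = q.
Proof.
move=> far xp xq; apply/eqP/negPn/negP => pq.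
have [a va ap] := far_vertex_nbr_dist_two far xp.
have [b vb bq] := far_vertex_nbr_dist_two far xq.
move: far; rewrite /within_two !negb_or => /and3P[xv vx no_path].
have px : e p x by rewrite e_sym.
have qx : e q x by rewrite e_sym.
have not_vadj z : e z x -> ~~ e v z.
  by move=> zx; apply: contra no_path => vz; apply/existsP; exists z; rewrite vz.
have vp := not_vadj p px; have vq := not_vadj q qx.
have vp' : v != p by apply: contraNneq vx => ->.
have vq' : v != q by apply: contraNneq vx => ->.
have vx' : v != x by rewrite eq_sym.
have ax : a != x by apply: contraNneq vx => <-.
have aq : a != q by apply: contraNneq vq => <-.
have pb : p != b by apply: contraNneq vp => ->.
have xb : x != b by apply: contraNneq vx => ->.
have [eq_ab|ab] := eqVneq a b.
  by apply: (no_square ap px xq); rewrite // e_sym eq_ab.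
by apply: (no_hexagon va ap px xq _ _ vp' vx' vq' ax aq ab pq pb xb); rewrite e_sym.
Qed.

Lemma dist_two_vertex_nbr_adj x a y :
  x != v -> ~~ e v x -> e v a -> e a x -> e x y -> within_two e v y -> e v y.
Proof.
move=> xv vx va ax xy; case/or3P=> [/eqP yv|->//|/existsP[b /andP[vb by_]]].
  by move: vx; rewrite -yv e_sym xy.
apply/negPn/negP => vy.
have [eq_ab|ab] := eqVneq a b.
  by apply: (no_triangle ax xy); rewrite e_sym eq_ab.
have vx' : v != x by rewrite eq_sym.
have vy' : v != y by apply: contraNneq vx => ->; rewrite e_sym.
have ay : a != y by apply: contraNneq vy => <-.
have xb : x != b by apply: contraNneq vx => ->.
by apply: (no_pentagon va ax xy _ _ vx' vy' ay ab xb); rewrite e_sym.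
Qed.

Lemma cycle_not_within_two (t : seq T) :
  cycle e t -> uniq t -> 2 < size t -> False.
Proof.
move=> t_cyc t_uniq t_gt2; have nbrs := cycle_nbrs t_cyc t_uniq t_gt2.
have near_t x : x \in t -> within_two e v x.
  move=> xt; apply/negPn/negP => far; have [p [q [_ _ pq px xq]]] := nbrs x xt.
  have xp : e x p by rewrite e_sym.
  by rewrite (far_vertex_nbr_unique far xp xq) eqxx in pq.
have close_t x : x \in t -> (x == v) || e v x.
  move=> xt; apply/norP => -[xv vx].
  case/or3P: (near_t x xt) => [xv'|vx'|/existsP[a /andP[va ax]]].
  - by rewrite xv' in xv.
  - by rewrite vx' in vx.
  have [p [q [pt qt pq px xq]]] := nbrs x xt.
  have nbr_adj := dist_two_vertex_nbr_adj xv vx va ax.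
  have vp : e v p by apply: nbr_adj; rewrite ?near_t // e_sym.
  have vq : e v q by apply: nbr_adj; rewrite ?near_t.
  by apply: (no_square vp px xq); rewrite 1?e_sym // eq_sym.
have nbr_of_adj x p : e v x -> e x p -> p \in t -> p = v.
  move=> vx xp /close_t /orP[/eqP //|vp].
  by case: (no_triangle vx xp); rewrite e_sym.
have [x xt vx] : exists2 x, x \in t & e v x.
  have yt : nth v t 0 \in t by apply: mem_nth; apply: ltn_trans t_gt2.
  have [p [_ [pt _ _ py _]]] := nbrs _ yt.
  case/orP: (close_t _ yt) => [/eqP yv|vy]; last by exists (nth v t 0).
  exists p => //; case/orP: (close_t _ pt) => // /eqP pv.
  by move: py; rewrite pv yv e_irr.
have [p [q [pt qt pq px xq]]] := nbrs x xt.
have xp : e x p by rewrite e_sym.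
by rewrite (nbr_of_adj x p vx xp pt) (nbr_of_adj x q vx xq qt) eqxx in pq.
Qed.

End GirthAtLeastSeven.

Theorem lemma1 (T : finType) (e : rel T) :
  simple_graph e ->
  connected_graph e ->
  ~ is_tree e ->
  in_class_G e ->
  exists g, girth_is e g /\ g <= 6.
Proof.
move=> [e_sym e_irr] conn not_tree inG.
have [g [cyc_g min_g]] := girth_exists (has_cycle_of_not_tree conn not_tree).
exists g; split=> //; rewrite leqNgt; apply/negP => g_gt6.
have no_short_cycle k : 2 < k < 7 -> ~~ has_cycle_len e k.
  case/andP=> _ k_lt7; apply/negP => /min_g g_le_k.
  by move: (leq_ltn_trans g_le_k k_lt7); rewrite ltnNge g_gt6.
have [B basisB] := local_adj_basis_exists e_irr.
have [v Bv] := inG B basisB.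
case/existsP: cyc_g => t /andP[/andP[g_gt2 t_cyc] t_uniq].
apply: (cycle_not_within_two e_sym e_irr no_short_cycle (v := v) _ t_cyc t_uniq).
- by move=> x y; apply: (resolving_edge_within_two basisB.1 Bv).
- by rewrite size_tuple.
Qed.
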